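(* Let $d,n\ge1$ and $\boldsymbol{x}_1,\dots,\boldsymbol{x}_n\in\mathbb{R}^d$, with $\boldsymbol{S}=\sum_{j=1}^n\boldsymbol{x}_j\boldsymbol{x}_j^\top$. There exist matrices $\boldsymbol{Q}_m,\boldsymbol{K}_m,\boldsymbol{V}_m\in\mathbb{R}^{2d\times2d}$, $m=1,2$, depending only on $d$ and $n$, and the matrix $\boldsymbol{W}=\begin{bmatrix}\boldsymbol{I}_d&\boldsymbol{O}_d\\ \boldsymbol{O}_d&\boldsymbol{O}_d\end{bmatrix}$, such that the following holds for every symmetric matrix $\boldsymbol{T}\in\mathbb{R}^{d\times d}$: if the 2-head full attention layer with normalized ReLU activation and parameters $\{\boldsymbol{Q}_m,\boldsymbol{K}_m,\boldsymbol{V}_m\}_{m=1}^2$ is applied to $\boldsymbol{H}=[\boldsymbol{h}_1,\dots,\boldsymbol{h}_n]$ with $\boldsymbol{h}_t=\begin{bmatrix}\boldsymbol{T}\boldsymbol{x}_t\\ \boldsymbol{x}_t\end{bmatrix}$, producing $\tilde{\boldsymbol{h}}_t$, then $$\tilde{\boldsymbol{h}}_t=\begin{bmatrix}\big(\boldsymbol{T}-\tfrac12\boldsymbol{T}\boldsymbol{S}\boldsymbol{T}\big)\boldsymbol{x}_t\\ \boldsymbol{x}_t\end{bmatrix}\quad\text{and}\quad \tilde{\boldsymbol{h}}_t+\boldsymbol{W}\tilde{\boldsymbol{h}}_t=\begin{bmatrix}\boldsymbol{T}'\boldsymbol{x}_t\\ \boldsymbol{x}_t\end{bmatrix}\ \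 (t\in[n]),$$ where $\boldsymbol{T}'=2\boldsymbol{T}-\boldsymbol{T}\boldsymbol{S}\boldsymbol{T}$, and $\boldsymbol{T}'$ is again symmetric. In particular, iterating this layer $k$ times starting from $\boldsymbol{T}^{(0)}=\alpha\boldsymbol{S}$ produces columns $\begin{bmatrix}\boldsymbol{M}_k\boldsymbol{x}_t\\ \boldsymbol{x}_t\end{bmatrix}$, where $\boldsymbol{M}_0=\alpha\boldsymbol{S}$ and $\boldsymbol{M}_{j}=2\boldsymbol{M}_{j-1}-\boldsymbol{M}_{j-1}\boldsymbol{S}\boldsymbol{M}_{j-1}$ for $j\ge1$.
   Context: A full attention layer with $M$ heads and normalized ReLU activation, with parameters $\{\boldsymbol{Q}_m,\boldsymbol{K}_m,\boldsymbol{V}_m\}_{m=1}^M$ (matrices of size $D\times D$), maps an input $\boldsymbol{H}=[\boldsymbol{h}_1,\dots,\boldsymbol{h}_n]\in\mathbb{R}^{D\times n}$ to $\tilde{\boldsymbol{H}}=[\tilde{\boldsymbol{h}}_1,\dots,\tilde{\boldsymbol{h}}_n]$ where $$\tilde{\boldsymbol{h}}_t=\boldsymbol{h}_t+\frac{1}{n}\sum_{m=1}^M\sum_{j=1}^n \mathrm{ReLU}\big(\langle \boldsymbol{Q}_m\boldsymbol{h}_t,\boldsymbol{K}_m\boldsymbol{h}_j\rangle\big)\,\boldsymbol{V}_m\boldsymbol{h}_j,\qquad t\in[n].$$ $\boldsymbol{I}_d$ and $\boldsymbol{O}_d$ denote the $d\times d$ identity and zero matrices. *)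

From HB Require Import structures.
From mathcomp Require Import all_boot all_order all_algebra.
From mathcomp Require Import reals.
Set Implicit Arguments. Unset Strict Implicit. Unset Printing Implicit Defensive.
Import Order.TTheory GRing.Theory Num.Theory.
Local Open Scope ring_scope.

Section Attn.
Variable R : realType.

Definition relu (a : R) : R := Num.max a 0.

Definition dotv (D : nat) (u v : 'cV[R]_D) : R := \sum_(i < D) u i 0 * v i 0.

Definition attn_layer (D n M : nat) (Q K V : 'I_M -> 'M[R]_D)
    (H : 'M[R]_(D, n)) : 'M[R]_(D, n) :=
  \matrix_(i < D, t < n)
    (H i t + (n%:R)^-1 *
       \sum_(m < M) \sum_(j < n)
          relu (dotv (Q m *m col t H) (K m *m col j H)) * (V m *m col j H) i 0).

Definition Smat (d n : nat) (x : 'I_n -> 'cV[R]_d) : 'M[R]_d :=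
  \sum_(j < n) x j *m (x j)^T.

Definition Hin (d n : nat) (x : 'I_n -> 'cV[R]_d) (T : 'M[R]_d) : 'M[R]_(d + d, n) :=
  \matrix_(i < d + d, t < n) (col_mx (T *m x t) (x t)) i 0.

Definition Wmat (d : nat) : 'M[R]_(d + d) :=
  block_mx (1%:M : 'M[R]_d) 0 0 0.

Definition step (d n : nat) (Q K V : 'I_2 -> 'M[R]_(d + d)) (H : 'M[R]_(d + d, n)) :=
  let Ht := attn_layer Q K V H in Ht + Wmat d *m Ht.

Fixpoint Mseq (d : nat) (S : 'M[R]_d) (alpha : R) (k : nat) : 'M[R]_d :=
  match k with
  | 0 => alpha *: S
  | k'.+1 => let P := Mseq S alpha k' in 2%:R *: P - P *m S *m P
  end.

End Attn.

From HB Require Import structures.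
From mathcomp Require Import all_boot all_order all_algebra.
From mathcomp Require Import reals.
Import Order.TTheory GRing.Theory Num.Theory.
Local Open Scope ring_scope.

(* Two heads with opposite signs combine ReLU(a) - ReLU(-a) = a, so the layer
   is linear attention H + n^-1 (V H) ((K H)^T (Q H)).  Take Q = W, K the
   block swap and V = -(n/2) W.  With X = [x_1 ... x_n], S = X X^T and
   H = [T X; X], the keys are [X; 0], the queries [T X; 0], their Gram matrix
   is X^T T X, and the update is -1/2 [T X X^T T X; 0] = -1/2 [T S T X; 0]. *)

Section LinearAttention.
Variable R : realType.

Lemma relu_sub (a : R) : relu a - relu (- a) = a.
Proof.
rewrite /relu; case: (ltrgt0P a) => ha.
- by rewrite max_r ?subr0 // oppr_le0 ltW.
- by rewrite max_l ?sub0r ?opprK // oppr_ge0 ltW.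
- by rewrite ha oppr0 maxxx subrr.
Qed.

Lemma sum_relu_pm (a b : R) :
  \sum_(m < 2) relu ((-1) ^+ m * a) * ((-1) ^+ m * b) = a * b.
Proof.
rewrite big_ord_recl big_ord1 /= expr0 expr1 !mul1r !mulN1r mulrN -mulrBl.
by rewrite relu_sub.
Qed.

Lemma dotvZl D (s : R) (u v : 'cV[R]_D) : dotv (s *: u) v = s * dotv u v.
Proof. by rewrite /dotv mulr_sumr; apply: eq_bigr => i _; rewrite mxE mulrA. Qed.

Lemma mulmx_col_mxE m p n (A : 'M[R]_(m, p)) (H : 'M[R]_(p, n)) i j :
  (A *m col j H) i 0 = (A *m H) i j.
Proof. by rewrite !mxE; apply: eq_bigr => k _; rewrite !mxE. Qed.

Lemma dotv_mulmx_col D n (Q K : 'M[R]_D) (H : 'M[R]_(D, n)) t j :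
  dotv (Q *m col t H) (K *m col j H) = ((K *m H)^T *m (Q *m H)) j t.
Proof.
rewrite /dotv [RHS]mxE; apply: eq_bigr => k _.
by rewrite !mulmx_col_mxE [X in _ = X * _]mxE mulrC.
Qed.

Lemma attn_layer_pm D n (Q K V : 'M[R]_D) (H : 'M[R]_(D, n)) :
  attn_layer (fun m : 'I_2 => (-1) ^+ m *: Q) (fun=> K)
             (fun m : 'I_2 => (-1) ^+ m *: V) H
  = H + n%:R^-1 *: (V *m H *m ((K *m H)^T *m (Q *m H))).
Proof.
apply/matrixP => i t; rewrite !mxE; congr (_ + _ * _).
rewrite exchange_big /=; apply: eq_bigr => j _.
under eq_bigr => m _ do rewrite -scalemxAl dotvZl -scalemxAl mxE.
by rewrite sum_relu_pm dotv_mulmx_col mulmx_col_mxE mulrC.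
Qed.

End LinearAttention.

Lemma trmx_newton_schulz (R : comPzRingType) d (S T : 'M[R]_d) :
  S^T = S -> T^T = T -> (2%:R *: T - T *m S *m T)^T = 2%:R *: T - T *m S *m T.
Proof. by move=> hS hT; rewrite linearB linearZ /= !trmx_mul hS hT mulmxA. Qed.

Section NewtonSchulzLayer.
Variables (R : realType) (d n : nat).

Lemma Wmat_col_mx p (A B : 'M[R]_(d, p)) : Wmat R d *m col_mx A B = col_mx A 0.
Proof. by rewrite mul_block_col !mul1mx !mul0mx !addr0. Qed.

Definition swap_mx : 'M[R]_(d + d) := block_mx 0 1%:M 0 0.

Lemma swap_mx_col_mx p (A B : 'M[R]_(d, p)) : swap_mx *m col_mx A B = col_mx B 0.
Proof. by rewrite mul_block_col !mul1mx !mul0mx !add0r. Qed.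

Definition attn_query (m : 'I_2) : 'M[R]_(d + d) := (-1) ^+ m *: Wmat R d.
Definition attn_key (m : 'I_2) : 'M[R]_(d + d) := swap_mx.
Definition attn_value (m : 'I_2) : 'M[R]_(d + d) :=
  (-1) ^+ m *: (- (n%:R / 2%:R) *: Wmat R d).

Variable x : 'I_n -> 'cV[R]_d.

Definition data_mx : 'M[R]_(d, n) := \matrix_(i, j) x j i 0.

Lemma Smat_data_mx : Smat x = data_mx *m data_mx^T.
Proof.
apply/matrixP => i k; rewrite summxE !mxE; apply: eq_bigr => j _.
by rewrite !mxE big_ord1 !mxE.
Qed.

Lemma trmx_Smat : (Smat x)^T = Smat x.
Proof. by rewrite Smat_data_mx trmx_mul trmxK. Qed.

Lemma HinE T : Hin x T = col_mx (T *m data_mx) data_mx.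
Proof.
apply/matrixP => i t; rewrite !mxE.
by case: splitP => k _; rewrite !mxE //; apply: eq_bigr => l _; rewrite mxE.
Qed.

Lemma col_Hin T t : col t (Hin x T) = col_mx (T *m x t) (x t).
Proof. by apply/matrixP => i k; rewrite !mxE (ord1 k). Qed.

Hypothesis n_gt0 : (0 < n)%N.

Lemma attn_layer_Hin T :
  attn_layer attn_query attn_key attn_value (Hin x T)
  = Hin x (T - 2%:R^-1 *: (T *m Smat x *m T)).
Proof.
rewrite attn_layer_pm !HinE swap_mx_col_mx -scalemxAl !Wmat_col_mx.
rewrite tr_col_mx trmx0 mul_row_col mul0mx addr0 -scalemxAl mul_col_mx mul0mx scalerA.
rewrite scale_col_mx scaler0 add_col_mx addr0 mulmxBl -scalemxAl Smat_data_mx.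
have -> : n%:R^-1 * - (n%:R / 2%:R) = - 2%:R^-1 :> R.
  by rewrite mulrN mulrA mulVf ?mul1r // pnatr_eq0 -lt0n.
by rewrite scaleNr !mulmxA.
Qed.

Lemma step_Hin T :
  step attn_query attn_key attn_value (Hin x T)
  = Hin x (2%:R *: T - T *m Smat x *m T).
Proof.
rewrite /step attn_layer_Hin !HinE Wmat_col_mx.
rewrite add_col_mx addr0 -mulmxDl -mulr2n -scaler_nat scalerBr scalerA.
by rewrite mulfV ?pnatr_eq0 // scale1r.
Qed.

Lemma iter_step_Hin alpha k :
  iter k (step attn_query attn_key attn_value) (Hin x (alpha *: Smat x))
  = Hin x (Mseq (Smat x) alpha k).
Proof. by elim: k => [|k IHk] //=; rewrite IHk step_Hin. Qed.

End NewtonSchulzLayer.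

Theorem mainTheorem3 (R : realType) (d n : nat) (hd : (0 < d)%N) (hn : (0 < n)%N) :
  exists Q K V : 'I_2 -> 'M[R]_(d + d),
  forall x : 'I_n -> 'cV[R]_d,
    (forall T : 'M[R]_d, T^T = T ->
       let S := Smat x in
       let T' := 2%:R *: T - T *m S *m T in
       let Ht := attn_layer Q K V (Hin x T) in
       (forall t : 'I_n,
          col t Ht = col_mx ((T - 2%:R^-1 *: (T *m S *m T)) *m x t) (x t)
          /\ col t (Ht + @Wmat R d *m Ht) = col_mx (T' *m x t) (x t))
       /\ T'^T = T')
    /\
    (forall (alpha : R) (k : nat) (t : 'I_n),
       col t (iter k (step Q K V) (Hin x (alpha *: Smat x)))
       = col_mx (Mseq (Smat x) alpha k *m x t) (x t)).
Proof.
exists (attn_query R d), (attn_key R d), (attn_value R d n) => x.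
split=> [T hT | alpha k t]; last by rewrite iter_step_Hin // col_Hin.
split; last by rewrite trmx_newton_schulz ?trmx_Smat.
move=> t; split; first by rewrite attn_layer_Hin // col_Hin.
by rewrite -col_Hin; exact (congr1 (col t) (step_Hin R d n x hn T)).
Qed.
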